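(* Let $n\ge2$, let $K$ be a field and let $\mathcal{V}=(V,K')$ be a model of the theory of infinite-dimensional non-degenerate alternating $n$-linear spaces over fields elementarily equivalent to $K$, in the language $\mathcal{L}^{K}_{\theta,f}$. Let $U=\{v_i:i<\kappa\}\subseteq V$ be a $K'$-linearly independent set, and let $L\subseteq K'$ be a subfield containing $\{\langle v_{i_1},\ldots,v_{i_n}\rangle_n:0\le i_1<\cdots<i_n<\kappa\}$. Then the $\mathcal{L}^{K}_{\theta,f}$-substructure of $\mathcal{V}$ generated by $U\cup L$ equals $(\operatorname{Span}_L(U),L)$.
   Context: Alternating: the form vanishes on linearly dependent tuples; non-degenerate: for every nonzero $t\in\bigwedge^{n-1}V$ there is $w$ with $\langle t,w\rangle_2\ne0$, where $\langle\overline{v_1\otimes\cdots\otimes v_{n-1}},v\rangle_2=\langle v_1,\ldots,v_{n-1},v\rangle_n$. The language $\mathcal{L}^{K}_{\theta,f}$: sorts $V,K$; field language $\{+,\cdot,-,{}^{-1},0,1\}$ on $K$; $+_V,0_V$; scalar multiplication; the form symbol; predicates $\theta_p$ for linear independence; functions $f^p_i(v;v_1,\ldots,v_p)$ equal to the $i$-th coefficient of $v$ in terms of $v_1,\ldots,v_p$ if these are linearly independent and $v$ is in their span, and $0$ otherwise; and an expansion $\mathcal{L}^K$ of the field language by $\emptyset$-definable relations (no new function or constant symbols). *)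

From HB Require Import structures.
From mathcomp Require Import all_boot all_order all_algebra.
Set Implicit Arguments. Unset Strict Implicit. Unset Printing Implicit Defensive.
Import Order.TTheory GRing.Theory Num.Theory.
Local Open Scope ring_scope.

(* Sentences of the language of (unit) rings with NO constants from any
   structure: terms/formulas over the empty type [void].                    *)
Fixpoint term_in (R : Type) (t : GRing.term void) : GRing.term R :=
  match t with
  | GRing.Var i => @GRing.Var R i
  | GRing.Const x => match x with end
  | GRing.NatConst k => @GRing.NatConst R k
  | GRing.Add a b => GRing.Add (term_in R a) (term_in R b)
  | GRing.Opp a => GRing.Opp (term_in R a)
  | GRing.NatMul a k => GRing.NatMul (term_in R a) k
  | GRing.Mul a b => GRing.Mul (term_in R a) (term_in R b)
  | GRing.Inv a => GRing.Inv (term_in R a)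
  | GRing.Exp a k => GRing.Exp (term_in R a) k
  end.

Fixpoint formula_in (R : Type) (f : GRing.formula void) : GRing.formula R :=
  match f with
  | GRing.Bool b => @GRing.Bool R b
  | GRing.Equal a b => GRing.Equal (term_in R a) (term_in R b)
  | GRing.Unit a => GRing.Unit (term_in R a)
  | GRing.And f g => GRing.And (formula_in R f) (formula_in R g)
  | GRing.Or f g => GRing.Or (formula_in R f) (formula_in R g)
  | GRing.Implies f g => GRing.Implies (formula_in R f) (formula_in R g)
  | GRing.Not f => GRing.Not (formula_in R f)
  | GRing.Exists i f => GRing.Exists i (formula_in R f)
  | GRing.Forall i f => GRing.Forall i (formula_in R f)
  end.

Definition elem_equiv (K1 K2 : fieldType) : Prop :=
  forall f : GRing.formula void,
    GRing.holds [::] (formula_in K1 f) <-> GRing.holds [::] (formula_in K2 f).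

Definition lin_indep (K : fieldType) (V : lmodType K) (I : eqType) (v : I -> V) : Prop :=
  forall (s : seq I) (c : I -> K), uniq s ->
    \sum_(i <- s) c i *: v i = 0 -> forall i, i \in s -> c i = 0.

Definition infinite_dim (K : fieldType) (V : lmodType K) : Prop :=
  ~ exists s : seq V, forall v : V,
      exists c : nat -> K, v = \sum_(i < size s) c i *: s`_i.

Definition span_over (K : fieldType) (V : lmodType K) (I : eqType)
  (L : K -> Prop) (U : I -> V) (v : V) : Prop :=
  exists (s : seq I) (c : I -> K), (forall i, L (c i)) /\ v = \sum_(i <- s) c i *: U i.

Definition is_subfield (K : fieldType) (L : K -> Prop) : Prop :=
  [/\ L 0, L 1,
      (forall x y, L x -> L y -> L (x + y)),
      (forall x y, L x -> L y -> L (x * y)) &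
      (forall x, L x -> L (- x)) /\ (forall x, L x -> L x^-1)].

Definition upd (V : Type) (n : nat) (x : {ffun 'I_n -> V}) (j : 'I_n) (y : V)
  : {ffun 'I_n -> V} := [ffun k => if k == j then y else x k].

Definition multilinear_to (K : fieldType) (V W : lmodType K) (n : nat)
  (g : {ffun 'I_n -> V} -> W) : Prop :=
  forall (x : {ffun 'I_n -> V}) (j : 'I_n) (a : K) (u w : V),
    g (upd x j (a *: u + w)) = a *: g (upd x j u) + g (upd x j w).

Definition alternating_to (K : fieldType) (V W : lmodType K) (n : nat)
  (g : {ffun 'I_n -> V} -> W) : Prop :=
  forall x : {ffun 'I_n -> V}, ~ lin_indep (fun k : 'I_n => x k) -> g x = 0.

Definition tup (V : Type) (n : nat) (g : nat -> V) : {ffun 'I_n -> V} :=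
  [ffun k : 'I_n => g (val k)].

(* The element  sum_p p.2 * (p.1 0 /\ ... /\ p.1 (m-1))  of the exterior power
   /\^m V is zero.  /\^m V is characterised by its universal property: an
   element is zero iff every alternating m-linear map sends it to 0. *)
Definition ext_zero (K : fieldType) (V : lmodType K) (m : nat)
  (r : seq ((nat -> V) * K)) : Prop :=
  forall (W : lmodType K) (g : {ffun 'I_m -> V} -> W),
    multilinear_to g -> alternating_to g ->
    \sum_(p <- r) p.2 *: g (tup m p.1) = 0.

(* ⟨t, w⟩_2 for t = sum_p p.2 * (p.1 0 /\ ... /\ p.1 (n-2)) *)
Definition pair2 (K : fieldType) (V : lmodType K) (n : nat)
  (form : {ffun 'I_n -> V} -> K) (r : seq ((nat -> V) * K)) (w : V) : K :=
  \sum_(p <- r) p.2 * form (tup n (fun k => if (k < n.-1)%N then p.1 k else w)).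

Definition nondegenerate (K : fieldType) (V : lmodType K) (n : nat)
  (form : {ffun 'I_n -> V} -> K) : Prop :=
  forall r : seq ((nat -> V) * K), ~ ext_zero n.-1 r ->
    exists w : V, pair2 form r w != 0.

Definition nda_form (K : fieldType) (V : lmodType K) (n : nat)
  (form : {ffun 'I_n -> V} -> K) : Prop :=
  [/\ multilinear_to (form : {ffun 'I_n -> V} -> K^o),
      alternating_to (form : {ffun 'I_n -> V} -> K^o) &
      nondegenerate form].

(* Graph of the function symbol f^p_i (with 0-based i < p): y = f^p_i(v; vs 0..vs (p-1)). *)
Definition fsym_graph (K : fieldType) (V : lmodType K) (p i : nat)
  (v : V) (vs : nat -> V) (y : K) : Prop :=
  let indep := lin_indep (fun k : 'I_p => vs (val k)) in
  let inspan := exists c : nat -> K, v = \sum_(k < p) c k *: vs k in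
  (indep /\ exists c : nat -> K, v = \sum_(k < p) c k *: vs k /\ y = c i)
  \/ (~ (indep /\ inspan) /\ y = 0).

(* (W, F) is closed under all function symbols of L^K_{theta,f}
   (the relation symbols theta_p and those of L^K play no role). *)
Definition closed_sub (K : fieldType) (V : lmodType K) (n : nat)
  (form : {ffun 'I_n -> V} -> K) (W : V -> Prop) (F : K -> Prop) : Prop :=
  [/\
      [/\ F 0, F 1,
          (forall x y, F x -> F y -> F (x + y)),
          (forall x y, F x -> F y -> F (x * y)) &
          (forall x, F x -> F (- x)) /\ (forall x, F x -> F x^-1)],
      [/\ W 0,
          (forall u w, W u -> W w -> W (u + w)) &
          (forall a u, F a -> W u -> W (a *: u))],
      (forall x : {ffun 'I_n -> V}, (forall k, W (x k)) -> F (form x)) &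
      (forall (p i : nat) (v : V) (vs : nat -> V) (y : K),
          (i < p)%N -> W v -> (forall k, (k < p)%N -> W (vs k)) ->
          fsym_graph p i v vs y -> F y)].

Definition gen_V (K : fieldType) (V : lmodType K) (n : nat)
  (form : {ffun 'I_n -> V} -> K) (A : V -> Prop) (B : K -> Prop) (v : V) : Prop :=
  forall W F, closed_sub form W F -> (forall u, A u -> W u) ->
    (forall a, B a -> F a) -> W v.

Definition gen_K (K : fieldType) (V : lmodType K) (n : nat)
  (form : {ffun 'I_n -> V} -> K) (A : V -> Prop) (B : K -> Prop) (a : K) : Prop :=
  forall W F, closed_sub form W F -> (forall u, A u -> W u) ->
    (forall b, B b -> F b) -> F a.

(* The pair (Span_L U, L) is closed under every function symbol, and any
   substructure containing U and L contains it.  For the form: by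
   multilinearity it suffices to evaluate it on tuples of generators v_i, and
   by alternation such a value is 0 or +-1 times a value on a strictly
   increasing tuple, which lies in L.  For f^p_i: the coordinates of a vector
   of Span_L U with respect to independent vectors of Span_L U solve a linear
   system with coefficients in L and a unique solution, hence lie in L by
   Cramer's rule. *)

From mathcomp Require Import all_boot all_order all_algebra.
From mathcomp Require Import fingroup perm.
Set Implicit Arguments. Unset Strict Implicit. Unset Printing Implicit Defensive.
Import Order.TTheory GRing.Theory.
Local Open Scope ring_scope.

Section Subfield.
Variables (K : fieldType) (L : K -> Prop).
Hypothesis L_subfield : is_subfield L.

Lemma subfield0 : L 0. Proof. by case: L_subfield. Qed.
Lemma subfield1 : L 1. Proof. by case: L_subfield. Qed.

Lemma subfieldD x y : L x -> L y -> L (x + y).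
Proof. by case: L_subfield => _ _ LD _ _; apply: LD. Qed.

Lemma subfieldM x y : L x -> L y -> L (x * y).
Proof. by case: L_subfield => _ _ _ LM _; apply: LM. Qed.

Lemma subfieldN x : L x -> L (- x).
Proof. by case: L_subfield => _ _ _ _ [LN _]; apply: LN. Qed.

Lemma subfieldV x : L x -> L x^-1.
Proof. by case: L_subfield => _ _ _ _ [_ LV]; apply: LV. Qed.

Lemma subfieldX x k : L x -> L (x ^+ k).
Proof.
move=> Lx; elim: k => [|k IHk]; first by rewrite expr0; apply: subfield1.
by rewrite exprS; apply: subfieldM.
Qed.

Lemma subfieldMn x k : L x -> L (x *+ k).
Proof.
move=> Lx; elim: k => [|k IHk]; first by rewrite mulr0n; apply: subfield0.
by rewrite mulrS; apply: subfieldD.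
Qed.

Lemma subfield_sum (J : Type) (r : seq J) (P : pred J) (f : J -> K) :
  (forall j, P j -> L (f j)) -> L (\sum_(j <- r | P j) f j).
Proof. by move=> Lf; apply: big_ind => //; [apply: subfield0 | apply: subfieldD]. Qed.

Lemma subfield_prod (J : Type) (r : seq J) (P : pred J) (f : J -> K) :
  (forall j, P j -> L (f j)) -> L (\prod_(j <- r | P j) f j).
Proof. by move=> Lf; apply: big_ind => //; [apply: subfield1 | apply: subfieldM]. Qed.

Lemma subfield_det k (A : 'M[K]_k) : (forall i j, L (A i j)) -> L (\det A).
Proof.
move=> LA; apply: subfield_sum => s _; apply: subfieldM.
  by apply: subfieldX; apply: subfieldN; apply: subfield1.
by apply: subfield_prod => i _; apply: LA.
Qed.

Lemma subfield_invmx k (A : 'M[K]_k) :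
  (forall i j, L (A i j)) -> forall i j, L (invmx A i j).
Proof.
move=> LA i j; rewrite /invmx; case: (A \in unitmx) => //.
rewrite !mxE; apply: subfieldM; first by apply: subfieldV; apply: subfield_det.
apply: subfieldM; first by apply: subfieldX; apply: subfieldN; apply: subfield1.
by apply: subfield_det => a b; rewrite !mxE.
Qed.

Lemma subfield_mulmx m k p (A : 'M[K]_(m, k)) (B : 'M[K]_(k, p)) :
  (forall i j, L (A i j)) -> (forall i j, L (B i j)) -> forall i j, L ((A *m B) i j).
Proof. by move=> LA LB i j; rewrite !mxE; apply: subfield_sum => l _; apply: subfieldM. Qed.

(* A row-free A has an invertible square column submatrix, inverted by the adjugate formula. *)
Lemma row_free_solution_subfield p m (A : 'M[K]_(p, m)) (b : 'rV_m) (c : 'rV_p) :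
  row_free A -> (forall i j, L (A i j)) -> (forall j, L (b 0 j)) ->
  c *m A = b -> forall k, L (c 0 k).
Proof.
move=> freeA LA Lb cAb k.
have fullAT : row_full A^T by rewrite /row_full mxrank_tr.
pose g := fullrankfun fullAT.
have unit_colsub : colsub g A \in unitmx.
  by rewrite -unitmx_tr trmx_mxsub fullrowsub_unit.
have -> : c = colsub g b *m invmx (colsub g A) by rewrite -cAb -mulmx_colsub mulmxK.
apply: subfield_mulmx => [i j|]; first by rewrite mxE [i]ord1.
by apply: subfield_invmx => i j; rewrite mxE.
Qed.

End Subfield.

Lemma sumr_count_mem (M : nmodType) (I : eqType) (S s : seq I) (G : I -> M) :
  uniq S -> {subset s <= S} ->
  \sum_(i <- s) G i = \sum_(j <- S) G j *+ count_mem j s.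
Proof.
move=> uS; elim: s => [|i s IHs] sub_sS.
  by rewrite big_nil big1 // => j _; rewrite mulr0n.
rewrite big_cons IHs; last by move=> j js; apply: sub_sS; rewrite inE js orbT.
have iS : i \in S by apply: sub_sS; rewrite mem_head.
under [in RHS]eq_bigr => j _ do rewrite /= mulrnDr.
rewrite big_split /=; congr (_ + _).
rewrite (bigD1_seq i) //= eqxx mulr1n big1 ?addr0 // => j /negPf.
by rewrite eq_sym => ->; rewrite mulr0n.
Qed.

Section SpanOver.
Variables (K : fieldType) (V : lmodType K) (I : eqType) (U : I -> V) (L : K -> Prop).
Hypothesis L_subfield : is_subfield L.

Definition span_on (S : seq I) (x : V) : Prop :=
  exists c : I -> K, (forall i, L (c i)) /\ x = \sum_(i <- S) c i *: U i.

Lemma span_onS (S s : seq I) x : uniq S -> {subset s <= S} -> span_on s x -> span_on S x.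
Proof.
move=> uS sub_sS [c [Lc ->]]; exists (fun j => c j *+ count_mem j s); split.
  by move=> j; apply: subfieldMn.
by rewrite (sumr_count_mem _ uS sub_sS); apply: eq_bigr => j _; rewrite scalerMnl.
Qed.

Lemma span_over_seq (xs : seq V) : (forall x, x \in xs -> span_over L U x) ->
  exists2 S, uniq S & forall x, x \in xs -> span_on S x.
Proof.
elim: xs => [|x xs IHxs] xs_span; first by exists [::].
have [|S uS HS] := IHxs; first by move=> y yxs; apply: xs_span; rewrite inE yxs orbT.
have [s xs_on] := xs_span x (mem_head _ _).
exists (undup (s ++ S)) => [|y]; first exact: undup_uniq.
rewrite inE => /predU1P [->|yxs].
  by apply: (span_onS (undup_uniq _) _ xs_on) => j js; rewrite mem_undup mem_cat js.
apply: (span_onS (undup_uniq _) _ (HS y yxs)) => j jS.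
by rewrite mem_undup mem_cat jS orbT.
Qed.

Lemma span_over0 : span_over L U 0.
Proof. by exists [::], (fun=> 0); split; [move=> _; apply: subfield0 | rewrite big_nil]. Qed.

Lemma span_overD x y : span_over L U x -> span_over L U y -> span_over L U (x + y).
Proof.
move=> Hx Hy; have [|S _ HS] := @span_over_seq [:: x; y].
  by move=> z; rewrite !inE => /orP [] /eqP ->.
have [cx [Lcx ->]] := HS x (mem_head _ _).
have [cy [Lcy ->]] : span_on S y by apply: HS; rewrite !inE eqxx orbT.
exists S, (fun j => cx j + cy j); split; first by move=> j; apply: subfieldD.
by rewrite -big_split; apply: eq_bigr => j _; rewrite scalerDl.
Qed.

Lemma span_overZ a x : L a -> span_over L U x -> span_over L U (a *: x).
Proof.
move=> La [s [c [Lc ->]]]; exists s, (fun j => a * c j); split.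
  by move=> j; apply: subfieldM.
by rewrite scaler_sumr; apply: eq_bigr => j _; rewrite scalerA.
Qed.

Lemma span_over_gen i : span_over L U (U i).
Proof.
exists [:: i], (fun=> 1); split; first by move=> _; apply: subfield1.
by rewrite big_seq1 scale1r.
Qed.

End SpanOver.

Section LinIndep.
Variables (K : fieldType) (V : lmodType K).

Lemma lin_indep_fin (J : finType) (f : J -> V) (z : J -> K) :
  lin_indep f -> \sum_j z j *: f j = 0 -> forall j, z j = 0.
Proof.
move=> f_indep z0 j; apply: (f_indep (enum J)) (enum_uniq _) _ j (mem_enum _ _).
by rewrite big_enum.
Qed.

Lemma lin_indep_tnth (I : eqType) (v : I -> V) (S : seq I) : uniq S -> lin_indep v ->
  lin_indep (fun r : 'I_(size S) => v (tnth (in_tuple S) r)).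
Proof.
move=> uS v_indep s c us sum0 r rs.
pose c' j := if insub (index j S) is Some r' then c r' else 0.
have c'E r' : c' (tnth (in_tuple S) r') = c r'.
  by rewrite /c' (tnth_nth (tnth (in_tuple S) r')) /= index_uniq // valK.
rewrite -c'E; apply: (v_indep (map (tnth (in_tuple S)) s)); last exact: map_f.
  by rewrite map_inj_uniq //; apply/tuple_uniqP.
by rewrite big_map -[RHS]sum0; apply: eq_bigr => r' _; rewrite c'E.
Qed.

End LinIndep.

Section AlternatingForm.
Variables (K : fieldType) (V : lmodType K) (n : nat) (form : {ffun 'I_n -> V} -> K).
Hypothesis form_multilinear : multilinear_to (form : {ffun 'I_n -> V} -> K^o).
Hypothesis form_alternating : alternating_to (form : {ffun 'I_n -> V} -> K^o).

Lemma form_updDZ x j a u w :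
  form (upd x j (a *: u + w)) = a * form (upd x j u) + form (upd x j w).
Proof. exact: form_multilinear. Qed.

Lemma form_upd0 x j : form (upd x j 0) = 0.
Proof.
have := form_updDZ x j 1 0 0; rewrite scaler0 addr0 mul1r.
by move/(congr1 (fun t => t - form (upd x j 0))); rewrite subrr addrK.
Qed.

Lemma form_updD x j u w : form (upd x j (u + w)) = form (upd x j u) + form (upd x j w).
Proof. by have := form_updDZ x j 1 u w; rewrite scale1r mul1r. Qed.

Lemma form_dup (x : {ffun 'I_n -> V}) a b : a != b -> x a = x b -> form x = 0.
Proof.
move=> neq_ab eq_xab; apply: form_alternating => x_indep.
have := x_indep [:: a; b] (fun k => if k == a then 1 else -1).
rewrite /= inE neq_ab big_cons big_seq1 eqxx eq_sym (negPf neq_ab).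
rewrite scale1r scaleN1r eq_xab subrr => /(_ isT erefl a (mem_head _ _)) /eqP.
by rewrite eqxx oner_eq0.
Qed.

Lemma upd_comm (x : {ffun 'I_n -> V}) a b u w : a != b ->
  upd (upd x a u) b w = upd (upd x b w) a u.
Proof.
move=> neq_ab; apply/ffunP => k; rewrite !ffunE.
by case: (eqVneq k b) => [kb|//]; case: (eqVneq k a) => [ka|//]; rewrite -ka -kb eqxx in neq_ab.
Qed.

Lemma form_tperm (x : {ffun 'I_n -> V}) a b : a != b ->
  form [ffun k => x (tperm a b k)] = - form x.
Proof.
move=> neq_ab; pose g u w := form (upd (upd x a u) b w).
have gDl u1 u2 w : g (u1 + u2) w = g u1 w + g u2 w.
  by rewrite /g !(upd_comm _ _ _ neq_ab) form_updD.
have gDr u w1 w2 : g u (w1 + w2) = g u w1 + g u w2 by rewrite /g form_updD.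
have gxx u : g u u = 0.
  by apply: (form_dup neq_ab); rewrite !ffunE eqxx (negPf neq_ab) eqxx.
have gx : g (x a) (x b) = form x.
  congr form; apply/ffunP => k; rewrite !ffunE.
  by case: (eqVneq k b) => [->|]//; case: (eqVneq k a) => [->|].
have gxT : g (x b) (x a) = form [ffun k => x (tperm a b k)].
  congr form; apply/ffunP => k; rewrite !ffunE.
  case: tpermP => [->|->|/eqP ka /eqP kb]; first by rewrite (negPf neq_ab) eqxx.
    by rewrite eqxx.
  by rewrite (negPf ka) (negPf kb).
apply/eqP; rewrite -addr_eq0 -gx -gxT addrC.
by have := gxx (x a + x b); rewrite gDl !gDr !gxx add0r addr0 => ->.
Qed.

Lemma form_perm (s : 'S_n) (x : {ffun 'I_n -> V}) :
  form [ffun k => x (s k)] = (-1) ^+ s * form x.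
Proof.
have [ts -> dts] := prod_tpermP s; elim: ts dts x => [|t ts IHts] /= dts x.
  by rewrite big_nil odd_perm1 mul1r; congr form; apply/ffunP => k; rewrite ffunE perm1.
case/andP: dts => dt dts; rewrite big_cons odd_mul_tperm dt addTb signrN mulNr.
set P := (\prod_(t <- ts) _)%g.
have -> : [ffun k => x ((tperm t.1 t.2 * P)%g k)] =
          [ffun k => [ffun k => x (P k)] (tperm t.1 t.2 k)].
  by apply/ffunP => k; rewrite !ffunE permM.
by rewrite form_tperm // IHts.
Qed.

End AlternatingForm.

Section FormOnSpan.
Variables (K : fieldType) (V : lmodType K) (n : nat) (form : {ffun 'I_n -> V} -> K).
Hypothesis form_multilinear : multilinear_to (form : {ffun 'I_n -> V} -> K^o).
Hypothesis form_alternating : alternating_to (form : {ffun 'I_n -> V} -> K^o).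
Variables (d : Order.disp_t) (I : orderType d) (v : I -> V) (L : K -> Prop).
Hypothesis L_subfield : is_subfield L.
Hypothesis form_increasing :
  forall idx : 'I_n -> I, (forall j k : 'I_n, (j < k)%N -> (idx j < idx k)%O) ->
    L (form [ffun k => v (idx k)]).

(* Sorting the indices changes the value only by the sign of the sorting permutation. *)
Lemma form_gen (idx : 'I_n -> I) : L (form [ffun k => v (idx k)]).
Proof.
have [/injectiveP idx_inj | /injectivePn [a [b neq_ab eq_idx]]] := boolP (injectiveb idx);
  last by rewrite (form_dup form_alternating neq_ab) ?ffunE ?eq_idx //; apply: subfield0.
pose t := [tuple idx k | k < n].
have t_uniq : uniq t by rewrite map_inj_uniq ?enum_uniq.
have /tuple_permP [s sort_t] : perm_eq (sort <=%O (t : seq I)) t by rewrite perm_sort.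
have sorted_t : sorted <%O (sort <=%O (t : seq I)) by rewrite sort_lt_sorted.
have idx_s_incr (j k : 'I_n) : (j < k)%N -> (idx (s j) < idx (s k))%O.
  move=> jk; have := sorted_ltn_nth lt_trans (idx (s j)) sorted_t j k.
  rewrite !inE size_sort size_tuple !ltn_ord sort_t -!tnth_nth !tnth_mktuple.
  by apply.
have := form_increasing idx_s_incr.
have -> : [ffun k => v (idx (s k))] = [ffun k => [ffun k => v (idx k)] (s k)].
  by apply/ffunP => k; rewrite !ffunE.
rewrite form_perm // => L_perm.
rewrite -(signrMK s (form [ffun k => v (idx k)])); apply: subfieldM => //.
by apply: (subfieldX L_subfield); apply: (subfieldN L_subfield); apply: (subfield1 L_subfield).
Qed.

Lemma form_upd_span x j w : (forall i, L (form (upd x j (v i)))) ->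
  span_over L v w -> L (form (upd x j w)).
Proof.
move=> L_gen [s [c [Lc ->]]]; elim: s => [|i s IHs].
  by rewrite big_nil form_upd0 //; apply: subfield0.
by rewrite big_cons form_updDZ //; apply: subfieldD => //; apply: subfieldM.
Qed.

Lemma form_span (x : {ffun 'I_n -> V}) : (forall k, span_over L v (x k)) -> L (form x).
Proof.
suff form_span_from j : (j <= n)%N -> forall y : {ffun 'I_n -> V},
    (forall k, span_over L v (y k)) ->
    (forall k : 'I_n, (j <= k)%N -> exists i, y k = v i) -> L (form y).
  by move=> x_span; apply: (form_span_from n) => // k; rewrite leqNgt ltn_ord.
elim: j => [_ | j IHj jn] y y_span y_gen.
  have [idx y_idx] := fin_all_exists (fun k => y_gen k (leq0n k)).
  have -> : y = [ffun k => v (idx k)] by apply/ffunP => k; rewrite ffunE y_idx.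
  exact: form_gen.
pose J := Ordinal jn.
have -> : y = upd y J (y J) by apply/ffunP => k; rewrite ffunE; case: eqP => [->|].
apply: form_upd_span (y_span J) => i; apply: (IHj (ltnW jn)) => k; rewrite ffunE.
  by case: eqP => _; [apply: span_over_gen | apply: y_span].
case: eqP => [_ _|/eqP neq_kJ le_jk]; first by exists i.
by apply: y_gen; rewrite ltn_neqAle le_jk andbT eq_sym.
Qed.

End FormOnSpan.

Section Coordinates.
Variables (K : fieldType) (V : lmodType K) (I : eqType) (v : I -> V) (L : K -> Prop).
Hypotheses (L_subfield : is_subfield L) (v_indep : lin_indep v).

(* Expanding w and the vs k on a common finite set S of generators turns c
   into the solution of a row-free linear system over L. *)
Lemma coord_span_subfield p (w : V) (vs : 'I_p -> V) (c : 'I_p -> K) :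
  span_over L v w -> (forall k, span_over L v (vs k)) -> lin_indep vs ->
  w = \sum_(k < p) c k *: vs k -> forall k, L (c k).
Proof.
move=> w_span vs_span vs_indep w_c.
have [|S uS S_span] :=
  @span_over_seq _ _ _ v L L_subfield (w :: [seq vs k | k <- enum 'I_p]).
  by move=> x; rewrite inE => /predU1P [->|/mapP [k _ ->]].
have [b [Lb w_b]] := S_span w (mem_head _ _).
have /fin_all_exists [a a_vs] : forall k, exists ak : I -> K,
    (forall i, L (ak i)) /\ vs k = \sum_(i <- S) ak i *: v i.
  by move=> k; apply: S_span; rewrite inE map_f ?orbT ?mem_enum.
pose u := tnth (in_tuple S).
pose comb (e : 'rV_(size S)) := \sum_r e 0 r *: v (u r).
pose A := \matrix_(k < p, r < size S) a k (u r).
have comb_mulmx (z : 'rV_p) : comb (z *m A) = \sum_k z 0 k *: vs k.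
  under [RHS]eq_bigr => k _ do rewrite (proj2 (a_vs k)) big_tnth scaler_sumr.
  rewrite exchange_big /=; apply: eq_bigr => r _.
  rewrite !mxE scaler_suml; apply: eq_bigr => k _.
  by rewrite mxE scalerA.
have freeA : row_free A.
  apply: inj_row_free => z zA0; apply/rowP => k; rewrite mxE.
  apply: (lin_indep_fin vs_indep); rewrite -comb_mulmx zA0.
  by apply: big1 => r _; rewrite mxE scale0r.
have comb_inj : injective comb.
  move=> e1 e2 eq_comb; apply/rowP => r; apply/eqP; rewrite -subr_eq0; apply/eqP.
  apply: (lin_indep_fin (lin_indep_tnth uS v_indep) (z := fun r => e1 0 r - e2 0 r)).
  under eq_bigr => r' _ do rewrite scalerBl.
  by rewrite sumrB; move: eq_comb; rewrite /comb => ->; rewrite subrr.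
have cA : \row_k c k *m A = \row_r b (u r).
  apply: comb_inj; rewrite comb_mulmx; under eq_bigr => k _ do rewrite mxE.
  by rewrite -w_c w_b big_tnth; apply: eq_bigr => r _; rewrite mxE.
move=> k; have := row_free_solution_subfield L_subfield freeA _ _ cA k.
by rewrite mxE; apply => [i j|j]; rewrite !mxE; [case: (a_vs i) | apply: Lb].
Qed.

End Coordinates.

Lemma closed_sub_span_over (K : fieldType) (V : lmodType K) (n : nat)
    (form : {ffun 'I_n -> V} -> K) (I : eqType) (v : I -> V) (L : K -> Prop)
    (W : V -> Prop) (F : K -> Prop) :
  closed_sub form W F -> (forall i, W (v i)) -> (forall a, L a -> F a) ->
  forall x, span_over L v x -> W x.
Proof.
move=> [_ [W0 WD WZ] _ _] Wv LF x [s [c [Lc ->]]].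
elim: s => [|i s IHs]; first by rewrite big_nil.
by rewrite big_cons; apply: WD => //; apply: WZ; [apply: LF | apply: Wv].
Qed.

Theorem lemma2p15 (n : nat) (K K' : fieldType) (V : lmodType K')
    (form : {ffun 'I_n -> V} -> K')
    (d : Order.disp_t) (I : orderType d) (v : I -> V) (L : K' -> Prop) :
  (2 <= n)%N ->
  elem_equiv K K' ->
  infinite_dim V ->
  nda_form form ->
  lin_indep v ->
  is_subfield L ->
  (forall idx : 'I_n -> I, (forall j k : 'I_n, (j < k)%N -> (idx j < idx k)%O) ->
     L (form [ffun k => v (idx k)])) ->
  (forall x : V, gen_V form (fun u => exists i, u = v i) L x <-> span_over L v x) /\
  (forall a : K', gen_K form (fun u => exists i, u = v i) L a <-> L a).
Proof.
move=> _ _ _ [form_ml form_alt _] v_indep L_subfield form_incr.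
have span_closed : closed_sub form (span_over L v) L.
  split; first exact: L_subfield.
  - split; [exact: span_over0 | exact: span_overD | exact: span_overZ].
  - exact: form_span.
  - move=> p i w vs y ip w_span vs_span [[vs_indep [c [w_c ->]]] | [_ ->]].
      apply: (coord_span_subfield L_subfield v_indep w_span _ vs_indep w_c (Ordinal ip)).
      by move=> k; apply: vs_span (ltn_ord k).
    exact: subfield0.
have v_span u : (exists i, u = v i) -> span_over L v u by case=> i ->; apply: span_over_gen.
split=> [x|a]; split.
- by apply; [exact: span_closed | exact: v_span | ].
- move=> x_span W F closedWF Wv LF.
  by apply: closed_sub_span_over closedWF _ LF _ x_span => i; apply: Wv; exists i.
- by apply; [exact: span_closed | exact: v_span | ].
- by move=> La W F _ _; apply.
Qed.
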